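(* Let $(N_0,c,w,P)$ be an RS-situation and $(N_0,v)$ the corresponding RS-game. Then $(N_0,v)$ is balanced, i.e. $Core(N_0,v)\neq\emptyset$.
   Context: Let $c\in\mathbb{R}$. An RS-problem is a triple $(c,w,p)$ where $w:\mathbb{R}_+\to(c,+\infty)$ is decreasing (non-increasing) and continuous, and $p:\mathbb{R}_+\to\mathbb{R}$ is decreasing (non-increasing) and continuous, satisfies $p(0)>w(0)$, and there exists $q>0$ with $p(q)=c$. An RS-situation is a tuple $(N_0,c,w,P)$ where $N=\{1,\dots,n\}$ is the set of retailers, $0$ denotes the supplier, $N_0=N\cup\{0\}$, $P=(p_1,\dots,p_n)$, and $(c,w,p_i)$ is an RS-problem for each $i\in N$. For $S\subseteq N$ write $S_0=S\cup\{0\}$. For $q\ge0$ and $\omega\in\mathbb{R}$, $\Pi_i^{ret}(q;\omega)=(p_i(q)-\omega)q$. For nonempty $S\subseteq N$, $(q_i^S)_{i\in S}$ is a fixed optimal solution of: maximize $\sum_{i\in S}(p_i(q_i)-w(q_S))q_i$ over $q\in\mathbb{R}_+^{S}$ subject to $p_i(q_i)\ge w(q_S)$ for all $i\in S$, where $q_S=\sum_{i\in S}q_i$; $q_S^S=\sum_{i\in S}q_i^S$. For $i\in N$, $q_i^c$ is a fixed optimal solution of: maximize $(p_i(q)-c)q$ over $q\ge0$ subject to $p_i(q)\ge c$. The corresponding RS-game $(N_0,v)$ is the TU game on $N_0$ with $v(\emptyset)=0$ and, for all $S\subseteq N$, $v(S)=\sum_{i\in S}\Pi_i^{ret}(q_i^S;w(q_S^S))$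 and $v(S_0)=\sum_{i\in S}\Pi_i^{ret}(q_i^c;c)$. The core is $Core(N_0,v)=\{x\in\mathbb{R}^{N_0}: \sum_{i\in N_0}x_i=v(N_0),\ \sum_{i\in T}x_i\ge v(T)\text{ for all }T\subset N_0\}$; a game is balanced iff its core is nonempty. *)

From HB Require Import structures.
From mathcomp Require Import all_boot all_order all_algebra.
From mathcomp Require Import all_classical all_reals all_analysis.
Set Implicit Arguments. Unset Strict Implicit. Unset Printing Implicit Defensive.
Import Order.TTheory GRing.Theory Num.Theory.
Import numFieldNormedType.Exports.
Local Open Scope classical_set_scope.
Local Open Scope ring_scope.

Section RS.
Variable R : realType.

Definition Rplus_set : set R := [set x | 0 <= x].

Definition nonincr_on_Rplus (f : R -> R) : Prop :=
  forall x y, 0 <= x -> x <= y -> f y <= f x.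

Definition RS_problem (c : R) (w p : R -> R) : Prop :=
  [/\ nonincr_on_Rplus w,
      {within Rplus_set, continuous w} &
      (forall x, 0 <= x -> c < w x)] /\
  [/\ nonincr_on_Rplus p,
      {within Rplus_set, continuous p},
      w 0 < p 0 &
      (exists q, 0 < q /\ p q = c)].

(* Retailers N = 'I_n; players N_0 = option 'I_n with None = supplier 0. *)
Definition RS_situation (n : nat) (c : R) (w : R -> R) (P : 'I_n -> R -> R) : Prop :=
  forall i, RS_problem c w (P i).

Definition Pi_ret (p : R -> R) (q omega : R) : R := (p q - omega) * q.

Definition qsum (n : nat) (S : {set 'I_n}) (q : 'I_n -> R) : R := \sum_(i in S) q i.

Definition coal_feasible (n : nat) (w : R -> R) (P : 'I_n -> R -> R)
    (S : {set 'I_n}) (q : 'I_n -> R) : Prop :=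
  forall i, i \in S -> 0 <= q i /\ w (qsum S q) <= P i (q i).

Definition coal_obj (n : nat) (w : R -> R) (P : 'I_n -> R -> R)
    (S : {set 'I_n}) (q : 'I_n -> R) : R :=
  \sum_(i in S) (P i (q i) - w (qsum S q)) * q i.

Definition coal_optimal (n : nat) (w : R -> R) (P : 'I_n -> R -> R)
    (S : {set 'I_n}) (q : 'I_n -> R) : Prop :=
  coal_feasible w P S q /\
  forall q', coal_feasible w P S q' -> coal_obj w P S q' <= coal_obj w P S q.

Definition single_optimal (c : R) (p : R -> R) (q : R) : Prop :=
  (0 <= q /\ c <= p q) /\
  forall q', 0 <= q' -> c <= p q' -> (p q' - c) * q' <= (p q - c) * q.

(* The RS-game, given the fixed optimal solutions qS (for coalitions) and qc. *)
Definition RS_game (n : nat) (c : R) (w : R -> R) (P : 'I_n -> R -> R)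
    (qS : {set 'I_n} -> 'I_n -> R) (qc : 'I_n -> R)
    (T : {set option 'I_n}) : R :=
  let S : {set 'I_n} := [set i : 'I_n | Some i \in T]%SET in
  if None \in T then \sum_(i in S) Pi_ret (P i) (qc i) c
  else \sum_(i in S) Pi_ret (P i) (qS S i) (w (qsum S (qS S))).

Definition core (N : finType) (v : {set N} -> R) : set (N -> R) :=
  [set x | \sum_(i in N) x i = v [set: N]%SET /\
           forall T : {set N}, T \proper [set: N]%SET -> v T <= \sum_(i in T) x i].

Definition balanced (N : finType) (v : {set N} -> R) : Prop :=
  core v !=set0.

End RS.

From HB Require Import structures.
From mathcomp Require Import all_boot all_order all_algebra.
From mathcomp Require Import all_classical all_reals all_analysis.
Set Implicit Arguments. Unset Strict Implicit. Unset Printing Implicit Defensive.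
Import Order.TTheory GRing.Theory Num.Theory.
Local Open Scope classical_set_scope.
Local Open Scope ring_scope.

(* Give every retailer its monopoly profit (p_i(q_i^c) - c) q_i^c, the best it
   can earn when buying at the production cost c, and give the supplier 0.
   A coalition containing the supplier obtains exactly the sum of these
   profits.  A coalition without the supplier buys at the wholesale price
   w > c, so each of its members earns at most its monopoly profit. *)

Lemma sum_oapp_set (V : nmodType) (I : finType) (f : I -> V)
    (T : {set option I}) :
  \sum_(o in T) oapp f 0 o = \sum_(i in [set i | Some i \in T]%SET) f i.
Proof.
rewrite (big_setID [set None]%SET) /= big1 ?add0r; last first.
  by move=> o /setIP[_ /set1P ->].
have -> : (T :\: [set None] = Some @: [set i | Some i \in T])%SET.
  apply/setP => -[i|]; rewrite !inE /=.
    apply/idP/imsetP => [Ti | [j]]; first by exists i; rewrite ?inE.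
    by rewrite inE => Tj [->].
  by apply/esym/negbTE/negP => /imsetP[].
by rewrite big_imset //= => i j _ _ [].
Qed.

Section RSGame.
Variables (R : realType) (n : nat) (c : R) (w : R -> R) (P : 'I_n -> R -> R).

Lemma Pi_ret_le_single_optimal (p : R -> R) (qc q omega : R) :
  single_optimal c p qc -> 0 <= q -> c <= omega -> omega <= p q ->
  Pi_ret p q omega <= Pi_ret p qc c.
Proof.
move=> [_ qc_max] q_ge0 c_le_omega omega_le_pq.
apply: le_trans (qc_max _ q_ge0 (le_trans c_le_omega omega_le_pq)).
by rewrite /Pi_ret ler_wpM2r // lerB.
Qed.

Lemma coal_feasible_qsum_ge0 (S : {set 'I_n}) (q : 'I_n -> R) :
  coal_feasible w P S q -> 0 <= qsum S q.
Proof. by move=> feas; apply: sumr_ge0 => i /feas[]. Qed.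

Definition monopoly_alloc (qc : 'I_n -> R) : option 'I_n -> R :=
  oapp (fun i => Pi_ret (P i) (qc i) c) 0.

Lemma RS_game_le_monopoly_alloc (qS : {set 'I_n} -> 'I_n -> R)
    (qc : 'I_n -> R) (T : {set option 'I_n}) :
  RS_situation c w P ->
  (forall S : {set 'I_n}, S != finset.set0 -> coal_optimal w P S (qS S)) ->
  (forall i : 'I_n, single_optimal c (P i) (qc i)) ->
  RS_game c w P qS qc T <= \sum_(o in T) monopoly_alloc qc o.
Proof.
move=> sit qS_opt qc_opt; rewrite sum_oapp_set /RS_game /=.
case: ifP => // _; set S := [set i | Some i \in T]%SET.
apply: ler_sum => i Si.
have S_neq0 : S != finset.set0 by apply/set0Pn; exists i.
have [feas _] := qS_opt S S_neq0.
have [qSi_ge0 w_le_p] := feas i Si.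
have [[_ _ c_lt_w] _] := sit i.
have c_lt_w_qS := c_lt_w _ (coal_feasible_qsum_ge0 feas).
exact: Pi_ret_le_single_optimal (qc_opt i) qSi_ge0 (ltW c_lt_w_qS) w_le_p.
Qed.

End RSGame.

Theorem theorem5p2 (R : realType) (n : nat) (c : R) (w : R -> R)
    (P : 'I_n -> R -> R) (qS : {set 'I_n} -> 'I_n -> R) (qc : 'I_n -> R) :
  RS_situation c w P ->
  (forall S : {set 'I_n}, S != finset.set0 -> coal_optimal w P S (qS S)) ->
  (forall i : 'I_n, single_optimal c (P i) (qc i)) ->
  balanced (RS_game c w P qS qc).
Proof.
move=> sit qS_opt qc_opt; exists (monopoly_alloc c P qc); split.
  transitivity (\sum_(o in [set: option 'I_n]%SET) monopoly_alloc c P qc o).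
    by apply: eq_bigl => o; rewrite !inE.
  by rewrite sum_oapp_set /RS_game /=; case: ifP => //; rewrite inE.
by move=> T _; exact: RS_game_le_monopoly_alloc.
Qed.
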